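(* Let $A$ be a setoid, $B$ a setoid family over $A$ and $(C,a_C)$ a $P_B$-algebra. For every $w:W$ and $F:\mathsf{CohMaps}\,w$ there is an extensional function $\mathsf{recst}\,w\,F:\mathsf{ImS}\,w\Rightarrow C$ such that, for every $w,w':W$, $\gamma:w\approx_Ww'$, $F:\mathsf{CohMaps}\,w$ and $F':\mathsf{CohMaps}\,w'$, there is a term \[ \mathsf{extrecst}\,\gamma: F\approx_\gamma F'\longrightarrow \mathsf{recst}\,w\,F\approx(\mathsf{recst}\,w'\,F')\circ\mathsf{ImS}_\gamma . \]
   Context: Setting: intensional Martin-Löf type theory with $\Pi$-types, record types and a universe $\mathsf U$ closed under $\Pi$ and containing intensional $\Sigma$-types, identity types, unit type, W-types and dependent W-types; propositions-as-types. For a W-type with constructor $\mathsf{sup}$, $\mathsf n,\mathsf b$ are node and branch functions. $\mathsf{DW}_{I,X,Y,d}:I\to\mathsf U$ denotes the dependent W-type (inductive family with constructor $\mathsf{dsup}\,i\,x\,f:\mathsf{DW}\,i$ for $x:X\,i$, $f:\prod_{y:Y\,i\,x}\mathsf{DW}(d\,i\,x\,y)$). A setoid $X$: type $X_0:\mathsf U$ with relation $\approx_X$ and proofs of reflexivity, symmetry, transitivity; $x:X$ means $x:X_0$. Extensional function $f:X\Rightarrow Y$: $f_0:X_0\to Y_0$ with a proof that it preserves $\approx$; $X\Rightarrow Y$ is a setoid with pointwise equality; $\circ$ is composition. A setoid family $B$ over setoid $A$: setoids $B\,a$ and transports $B_\alpha:B\,a\Rightarrow B\,a'$ for $\alpha:a\approx_Aa'$,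 functorial up to $\approx$, with $B_\alpha\approx B_{\alpha'}$ for all $\alpha,\alpha'$. Write $b\approx_\alpha b'$ for $B_\alpha b\approx b'$. $P_BX$: setoid with underlying type $\sum_{a:A}(B\,a\Rightarrow X)$ and $(a,k)\approx(a',k'):=\sum_{\alpha:a\approx a'}k\approx k'\circ B_\alpha$. A $P_B$-algebra is a setoid $C$ with extensional $a_C:P_BC\Rightarrow C$. $W$: with $A_0,B_0$ underlying types and $\mathsf W:=\mathsf W(A_0,B_0)$, $\approx^Bw\,w':=\mathsf{DW}_{I,X,Y,d}(w,w')$ with $I:=\mathsf W\times\mathsf W$, $X(w,w'):=\mathsf nw\approx_A\mathsf nw'$, $Y(w,w')\alpha:=\sum_{b,b'}b\approx_\alpha b'$, $d(w,w')\alpha(b,b',\beta):=(\mathsf bwb,\mathsf bw'b')$. $W$: underlying type $\sum_{w:\mathsf W}\approx^Bw\,w$, $(w,\_)\approx_W(w',\_):=\approx^Bw\,w'$. $\mathsf n$, $\mathsf b$ induce extensional $\mathsf n:W\Rightarrow A$ and $\mathsf b\,w:B(\mathsf nw)\Rightarrow W$; for $\gamma:w\approx_Ww'$, $\mathsf n^\ast\gamma:\mathsf nw\approx_A\mathsf nw'$ is extensionality of $\mathsf n$ applied to $\gamma$, and there is $\mathsf{extb}\,\gamma:\mathsf b\,w\approx(\mathsf b\,w')\circ B_{\mathsf n^\ast\gamma}$, whose value at $s$ we write $\mathsf{extb}\,\gamma\,s:\mathsf bws\approx_W\mathsf bw'(B_{\mathsf n^\ast\gamma}s)$. $\mathsf{ImS}\,w$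 (for $w:W$): setoid with underlying type $B_0(\mathsf nw)$ and $b\approx b':=\mathsf bwb\approx_W\mathsf bwb'$; transport $\mathsf{ImS}_\gamma s:=B_{\mathsf n^\ast\gamma}s$ for $\gamma:w\approx_Ww'$. A family $F:\prod_{s:\mathsf{ImS}w}\mathsf{ImS}(\mathsf bws)\Rightarrow C$ is coherent if $F\,s\approx(F\,s')\circ\mathsf{ImS}_\sigma$ for all $\sigma:s\approx s'$ in $\mathsf{ImS}\,w$; $\mathsf{CohMaps}\,w$ is the setoid of coherent families with $F\approx F':=\prod_sF\,s\approx F'\,s$. For $\gamma:w\approx_Ww'$, $F:\mathsf{CohMaps}\,w$, $F':\mathsf{CohMaps}\,w'$, $F\approx_\gamma F'$ means $\prod_{s:\mathsf{ImS}w}F\,s\approx(F'(\mathsf{ImS}_\gamma s))\circ\mathsf{ImS}_{\mathsf{extb}\,\gamma\,s}$. *)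

Record setoid : Type := Setoid {
  car :> Type;
  eqv : car -> car -> Type;
  eqv_refl : forall x, eqv x x;
  eqv_sym : forall x y, eqv x y -> eqv y x;
  eqv_trans : forall x y z, eqv x y -> eqv y z -> eqv x z }.
Arguments eqv {s} x y.
Arguments eqv_refl {s} x.
Arguments eqv_sym {s x y} _.
Arguments eqv_trans {s x y z} _ _.

Record extfun (X Y : setoid) : Type := ExtFun {
  ap :> X -> Y;
  ap_ext : forall x x' : X, eqv x x' -> eqv (ap x) (ap x') }.
Arguments ExtFun {X Y} _ _.
Arguments ap {X Y} _ _.
Arguments ap_ext {X Y} _ {x x'} _.

Definition fun_setoid (X Y : setoid) : setoid :=
  @Setoid (extfun X Y) (fun f g => forall x : X, eqv (f x) (g x))
    (fun f x => eqv_refl (f x))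
    (fun f g p x => eqv_sym (p x))
    (fun f g h p q x => eqv_trans (p x) (q x)).

Definition comp {X Y Z : setoid} (g : extfun Y Z) (f : extfun X Y) : extfun X Z :=
  ExtFun (fun x => g (f x)) (fun x x' e => ap_ext g (ap_ext f e)).

Record setfam (A : setoid) : Type := SetFam {
  fam :> A -> setoid;
  tr : forall a a' : A, eqv a a' -> extfun (fam a) (fam a');
  tr_id : forall (a : A) (x : fam a), eqv (tr a a (eqv_refl a) x) x;
  tr_comp : forall (a a' a'' : A) (al : eqv a a') (be : eqv a' a'') (x : fam a),
      eqv (tr a' a'' be (tr a a' al x)) (tr a a'' (eqv_trans al be) x);
  tr_irr : forall (a a' : A) (al al' : eqv a a') (x : fam a),
      eqv (tr a a' al x) (tr a a' al' x) }.
Arguments tr {A} _ {a a'} _.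
Arguments tr_id {A} _ {a} x.
Arguments tr_comp {A} _ {a a' a''} al be x.
Arguments tr_irr {A} _ {a a'} al al' x.

Definition PB_eqv {A : setoid} (B : setfam A) (X : setoid)
  (u v : { a : A & extfun (B a) X }) : Type :=
  { al : eqv (projT1 u) (projT1 v) &
    forall x : B (projT1 u), eqv (projT2 u x) (projT2 v (tr B al x)) }.

Definition PB {A : setoid} (B : setfam A) (X : setoid) : setoid.
Proof.
  refine (@Setoid { a : A & extfun (B a) X } (PB_eqv B X) _ _ _).
  - intros [a k]. exists (eqv_refl a). intros x; simpl.
    apply ap_ext. apply eqv_sym. apply tr_id.
  - intros [a k] [a' k'] [al p]; simpl in *.
    exists (eqv_sym al). intros y; simpl.
    apply eqv_sym. eapply eqv_trans; [apply p|]. apply ap_ext.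
    eapply eqv_trans; [apply tr_comp|].
    eapply eqv_trans; [apply (tr_irr B _ (eqv_refl a') y)|].
    apply tr_id.
  - intros [a k] [a' k'] [a'' k''] [al p] [be q]; simpl in *.
    exists (eqv_trans al be). intros x; simpl.
    eapply eqv_trans; [apply p|]. eapply eqv_trans; [apply q|].
    apply ap_ext. apply tr_comp.
Defined.

Inductive Wt (A0 : Type) (B0 : A0 -> Type) : Type :=
  sup : forall a : A0, (B0 a -> Wt A0 B0) -> Wt A0 B0.
Arguments sup {A0 B0} a _.

Definition node {A0 B0} (w : @Wt A0 B0) : A0 := match w with sup a _ => a end.
Definition branch {A0 B0} (w : @Wt A0 B0) : B0 (node w) -> Wt A0 B0 :=
  match w return B0 (node w) -> Wt A0 B0 with sup _ f => f end.

Inductive DW (I : Type) (X : I -> Type) (Y : forall i, X i -> Type)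
  (d : forall i (x : X i), Y i x -> I) : I -> Type :=
  dsup : forall (i : I) (x : X i), (forall y : Y i x, DW I X Y d (d i x y)) ->
         DW I X Y d i.
Arguments dsup {I X Y d} i x _.

Section WSetoid.
Context {A : setoid} (B : setfam A).

Definition B0 (a : A) : Type := car (B a).
Definition IW : Type := (Wt (car A) B0 * Wt (car A) B0)%type.
Definition XW (i : IW) : Type := eqv (node (fst i)) (node (snd i)).
Definition YW (i : IW) (al : XW i) : Type :=
  { b : B0 (node (fst i)) & { b' : B0 (node (snd i)) & eqv (tr B al b) b' } }.
Definition dW (i : IW) (al : XW i) (y : YW i al) : IW :=
  (branch (fst i) (projT1 y), branch (snd i) (projT1 (projT2 y))).

Definition DWB := DW IW XW YW dW.

Definition eqB (w w' : Wt (car A) B0) : Type := DWB (w, w').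

Definition nproof {i : IW} (p : DWB i) : XW i :=
  match p with dsup _ x _ => x end.

Definition subrel {i : IW} (p : DWB i) :
  forall (b : B0 (node (fst i))) (b' : B0 (node (snd i))),
    eqv (tr B (nproof p) b) b' -> DWB (branch (fst i) b, branch (snd i) b') :=
  match p as p0 in DW _ _ _ _ i0
    return forall (b : B0 (node (fst i0))) (b' : B0 (node (snd i0))),
      eqv (tr B (nproof p0) b) b' -> DWB (branch (fst i0) b, branch (snd i0) b')
  with dsup i0 x f => fun b b' be => f (existT _ b (existT _ b' be)) end.

Lemma tr_inv {a a' : A} (al : eqv a a') (b : B a) (b' : B a') :
  eqv (tr B (eqv_sym al) b') b -> eqv (tr B al b) b'.
Proof.
  intros h. eapply eqv_trans; [apply ap_ext, eqv_sym, h|].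
  eapply eqv_trans; [apply tr_comp|].
  eapply eqv_trans; [apply (tr_irr B _ (eqv_refl a'))|]. apply tr_id.
Qed.

Lemma tr_comp_inv {a a' a'' : A} (al : eqv a a') (be : eqv a' a'') (b : B a) (b'' : B a'') :
  eqv (tr B (eqv_trans al be) b) b'' -> eqv (tr B be (tr B al b)) b''.
Proof. intros h. exact (eqv_trans (tr_comp B al be b) h). Qed.

Lemma tr_refl_any {a : A} (al : eqv a a) (b : B a) : eqv (tr B al b) b.
Proof. exact (eqv_trans (tr_irr B al (eqv_refl a) b) (tr_id B b)). Qed.

Fixpoint eqB_sym_gen (i : IW) (p : DWB i) {struct p} : DWB (snd i, fst i) :=
  match p in DW _ _ _ _ i0 return DWB (snd i0, fst i0) with
  | dsup i0 x f => dsup (snd i0, fst i0) (eqv_sym x)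
      (fun y => eqB_sym_gen _
         (f (existT _ (projT1 (projT2 y))
              (existT _ (projT1 y) (tr_inv x _ _ (projT2 (projT2 y)))))))
  end.

Fixpoint eqB_trans_gen (i : IW) (p : DWB i) {struct p} :
  forall w'', DWB (snd i, w'') -> DWB (fst i, w'') :=
  match p in DW _ _ _ _ i0
    return forall w'', DWB (snd i0, w'') -> DWB (fst i0, w'') with
  | dsup i0 x f => fun w'' q =>
      dsup (fst i0, w'') (eqv_trans x (nproof q))
        (fun y => eqB_trans_gen _
           (f (existT _ (projT1 y) (existT _ (tr B x (projT1 y)) (eqv_refl _))))
           (branch w'' (projT1 (projT2 y)))
           (subrel q (tr B x (projT1 y)) (projT1 (projT2 y))
              (tr_comp_inv x (nproof q) _ _ (projT2 (projT2 y)))))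
  end.

Definition Wset : setoid :=
  @Setoid { w : Wt (car A) B0 & eqB w w }
    (fun u v => eqB (projT1 u) (projT1 v))
    (fun u => projT2 u)
    (fun u v p => eqB_sym_gen _ p)
    (fun u v z p q => eqB_trans_gen _ p _ q).

Definition nW : extfun Wset A :=
  ExtFun (fun u : Wset => node (projT1 u)) (fun u v p => nproof p).

Definition nstar {u v : Wset} (g : eqv u v) : eqv (nW u) (nW v) := ap_ext nW g.

Definition bW (u : Wset) (b : B (nW u)) : Wset :=
  existT _ (branch (projT1 u) b)
    (subrel (projT2 u) b b (tr_refl_any (nproof (projT2 u)) b)).

Definition extb {u v : Wset} (g : eqv u v) (s : B (nW u)) :
  eqv (bW u s) (bW v (tr B (nstar g) s)) :=
  subrel g s (tr B (nstar g) s) (eqv_refl _).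

Definition ImS (u : Wset) : setoid :=
  @Setoid (B (nW u)) (fun b b' => eqv (bW u b) (bW u b'))
    (fun b => eqv_refl _)
    (fun b b' p => eqv_sym p)
    (fun b b' b'' p q => eqv_trans p q).

Definition ImS_tr {u v : Wset} (g : eqv u v) : extfun (ImS u) (ImS v) :=
  ExtFun (fun s : ImS u => (tr B (nstar g) s : ImS v))
    (fun (s s' : ImS u) (e : @eqv (ImS u) s s') =>
       (@eqv_trans Wset _ _ _ (eqv_sym (extb g s))
          (@eqv_trans Wset _ _ _ e (extb g s'))
        : @eqv (ImS v) (tr B (nstar g) s) (tr B (nstar g) s'))).

End WSetoid.

Section Coh.
Context {A : setoid} (B : setfam A) (C : setoid).

Definition coherent (u : Wset B)
  (F : forall s : ImS B u, extfun (ImS B (bW B u s)) C) : Type :=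
  forall (s s' : ImS B u) (sg : eqv s s'),
    @eqv (fun_setoid _ C) (F s) (comp (F s') (ImS_tr B sg)).

Definition CohMaps (u : Wset B) : setoid :=
  @Setoid { F : forall s : ImS B u, extfun (ImS B (bW B u s)) C & coherent u F }
    (fun F F' => forall s : ImS B u, @eqv (fun_setoid _ C) (projT1 F s) (projT1 F' s))
    (fun F s => eqv_refl (s := fun_setoid _ C) (projT1 F s))
    (fun F F' p s => eqv_sym (p s))
    (fun F F' F'' p q s => eqv_trans (p s) (q s)).

Definition coh_rel {u v : Wset B} (g : eqv u v) (F : CohMaps u) (F' : CohMaps v) : Type :=
  forall s : ImS B u,
    @eqv (fun_setoid _ C) (projT1 F s)
      (comp (projT1 F' (ImS_tr B g s)) (ImS_tr B (extb B g s))).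

End Coh.


(* recst w F sends s to a_C applied to the node of the subtree b w s together
   with F s, read as a map out of B (n (b w s)).  Coherence of F is exactly
   what makes this extensional in s, and F ~_gamma F' is exactly what makes
   the two P_B C-points over w and w' equal. *)

Section Recursion.
Context {A : setoid} (B : setfam A) (C : setoid) (aC : extfun (PB B C) C).

(* [B]-equal branches give [eqB]-equal subtrees, through the self-equality
   proof carried by [u]. *)
Definition ImS_incl (u : Wset B) : extfun (B (nW B u)) (ImS B u) :=
  ExtFun (fun b : B (nW B u) => (b : ImS B u))
    (fun b b' e => subrel B (projT2 u) b b' (eqv_trans (tr_refl_any B _ b) e)).

Definition recst_point (u : Wset B) (F : CohMaps B C u) (s : ImS B u) : PB B C :=
  existT _ (nW B (bW B u s)) (comp (projT1 F s) (ImS_incl (bW B u s))).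

Lemma recst_point_ext (u : Wset B) (F : CohMaps B C u) (s s' : ImS B u) :
  eqv s s' -> eqv (recst_point u F s) (recst_point u F s').
Proof.
  intros sg. exists (nstar B sg). intros x. exact (projT2 F s s' sg x).
Qed.

Definition recst (u : Wset B) (F : CohMaps B C u) : extfun (ImS B u) C :=
  ExtFun (fun s => aC (recst_point u F s))
    (fun s s' sg => ap_ext aC (recst_point_ext u F s s' sg)).

Lemma recst_point_coh_rel (u v : Wset B) (g : eqv u v)
    (F : CohMaps B C u) (F' : CohMaps B C v) :
  coh_rel B C g F F' ->
  forall s : ImS B u, eqv (recst_point u F s) (recst_point v F' (ImS_tr B g s)).
Proof.
  intros HF s. exists (nstar B (extb B g s)). intros x. exact (HF s x).
Qed.

Lemma extrecst (u v : Wset B) (g : eqv u v) (F : CohMaps B C u) (F' : CohMaps B C v) :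
  coh_rel B C g F F' ->
  @eqv (fun_setoid (ImS B u) C) (recst u F) (comp (recst v F') (ImS_tr B g)).
Proof.
  intros HF s. exact (ap_ext aC (recst_point_coh_rel u v g F F' HF s)).
Qed.

End Recursion.

Theorem lemma3p9 (A : setoid) (B : setfam A) (C : setoid) (aC : extfun (PB B C) C) :
  { recst : forall (w : Wset B) (F : CohMaps B C w), extfun (ImS B w) C &
    forall (w w' : Wset B) (g : eqv w w') (F : CohMaps B C w) (F' : CohMaps B C w'),
      coh_rel B C g F F' ->
      @eqv (fun_setoid (ImS B w) C) (recst w F) (comp (recst w' F') (ImS_tr B g)) }.
Proof.
  exists (recst B C aC).
  exact (extrecst B C aC).
Qed.
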